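(* Let $T$ be a local, translation-invariant stochastic matrix on $\mathbb{Z}\times\{1,\dots,D\}$ with $\det X(k)\ne0$ for all $k\in[-\pi,\pi]$. Suppose there are positive numbers $\pi_1,\dots,\pi_D>0$ such that, setting $\pi_{i,a}=\pi_a$ for all $i$, the vector $\boldsymbol\pi=(\pi_{i,a})$ is a steady state, $T\boldsymbol\pi=\boldsymbol\pi$, and $T$ satisfies the detailed balance condition $$T_{i,a;j,b}\,\pi_{j,b}=T_{j,b;i,a}\,\pi_{i,a}\quad\text{for all } i,j,a,b .$$ Then $w(T,0)=0$.
   Context: States are pairs $(j,a)$, $j\in\mathbb{Z}$, $a\in\{1,\dots,D\}$. A stochastic matrix is a real matrix $T=(T_{i,a;j,b})$ with $T_{i,a;j,b}\ge0$ and $\sum_{i,a}T_{i,a;j,b}=1$ for all $(j,b)$. It is local if there are $C,\ell>0$ with $T_{i,a;j,b}\le Ce^{-|i-j|/\ell}$ for all sufficiently large $|i-j|$, and translation invariant if $T_{i+1,a;j+1,b}=T_{i,a;j,b}$. The Bloch matrix is $X(k)$ with $X_{a,b}(k)=\sum_{l\in\mathbb{Z}}T_{j+l,a;j,b}e^{-ikl}$, $k\in[-\pi,\pi]$, and $w(T,0)=\int_{-\pi}^{\pi}\frac{dk}{2\pi i}\partial_k\log\det X(k)\in\mathbb{Z}$. *)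

From Stdlib Require Import Reals ZArith.
From Coquelicot Require Import Coquelicot.
From mathcomp Require Import all_boot all_algebra.
From mathcomp Require Import Rstruct complex.

Set Implicit Arguments.
Unset Strict Implicit.
Unset Printing Implicit Defensive.

Import ComplexField.
Local Open Scope ring_scope.

(* A (real) matrix indexed by states (j,a), j : Z, a : 'I_D.
   T i a j b stands for T_{i,a; j,b}. *)
Definition ZMat (D : nat) := Z -> 'I_D -> Z -> 'I_D -> R.

Definition Zsum_is (f : Z -> R) (s : R) : Prop :=
  exists s1 s2 : R,
    is_series (fun n : nat => f (Z.of_nat n)) s1 /\
    is_series (fun n : nat => f (Z.opp (Z.of_nat (S n)))) s2 /\
    s = (s1 + s2)%R.

Definition ZSeries (f : Z -> R) : R :=
  (Series (fun n : nat => f (Z.of_nat n)) +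
   Series (fun n : nat => f (Z.opp (Z.of_nat (S n)))))%R.

Definition is_stochastic (D : nat) (T : ZMat D) : Prop :=
  (forall i a j b, (0 <= T i a j b)%R) /\
  (forall j b, Zsum_is (fun i => \sum_(a < D) T i a j b)%R 1%R).

Definition is_local (D : nat) (T : ZMat D) : Prop :=
  exists C l : R, (0 < C)%R /\ (0 < l)%R /\
    exists N : Z, forall i a j b, Z.le N (Z.abs (Z.sub i j)) ->
      (T i a j b <= C * exp (- IZR (Z.abs (Z.sub i j)) / l))%R.

Definition is_transl_inv (D : nat) (T : ZMat D) : Prop :=
  forall i a j b, T (Z.add i 1) a (Z.add j 1) b = T i a j b.

(* Bloch matrix X_{a,b}(k) = sum_l T_{j+l,a;j,b} e^{-ikl} (taken at j = 0),
   with e^{-ikl} = cos(kl) - i sin(kl). *)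
Definition Bloch_re (D : nat) (T : ZMat D) (k : R) (a b : 'I_D) : R :=
  ZSeries (fun l => T l a Z0 b * cos (k * IZR l))%R.

Definition Bloch_im (D : nat) (T : ZMat D) (k : R) (a b : 'I_D) : R :=
  ZSeries (fun l => - (T l a Z0 b * sin (k * IZR l)))%R.

Definition Bloch (D : nat) (T : ZMat D) (k : R) : 'M[R[i]]_D :=
  \matrix_(a < D, b < D) (Bloch_re T k a b +i* Bloch_im T k a b)%C.

Definition detBloch (D : nat) (T : ZMat D) (k : R) : R[i] :=
  \det (Bloch T k).

Definition detBloch_deriv (D : nat) (T : ZMat D) (k : R) : R[i] :=
  (Derive (fun k' => Re (detBloch T k')) k
     +i* Derive (fun k' => Im (detBloch T k')) k)%C.

Definition dlogdet (D : nat) (T : ZMat D) (k : R) : R[i] :=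
  (detBloch_deriv T k / detBloch T k)%R.

(* w(T,0) = \int_{-pi}^{pi} dk/(2 pi i) d/dk log det X(k) *)
Definition winding0 (D : nat) (T : ZMat D) : R[i] :=
  ((RInt (fun k => Re (dlogdet T k)) (- PI) PI
      +i* RInt (fun k => Im (dlogdet T k)) (- PI) PI)%C
   / (0 +i* (2 * PI))%C)%R.

(* Detailed balance together with translation invariance gives
   X(k)_{ab} = (pi_a / pi_b) X(-k)_{ba}, i.e. X(k) = P X(-k)^T P^-1 with
   P = diag(pi); hence det X(k) is even in k, the integrand
   d/dk log det X(k) is odd, and its integral over [-pi, pi] vanishes.
   Evenness of det X only yields oddness of its derivative where the
   derivative exists, so the Bloch entries must be shown differentiable:
   locality makes their Fourier coefficients decay exponentially, which
   justifies termwise differentiation. *)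

From Stdlib Require Import Reals ZArith Lra Lia Classical.
From Coquelicot Require Import Coquelicot.
From mathcomp Require Import all_boot all_algebra.
From mathcomp Require Import Rstruct complex.
Import GRing.Theory ComplexField.

Local Open Scope R_scope.

(* The terms are those of the derivative of the power series of 1 / (1 - q). *)
Lemma ex_series_succ_mul_geom q : Rabs q < 1 -> ex_series (fun n => (INR n + 1) * q ^ n).
Proof.
move=> Hq.
have radius_geom : CV_radius (fun _ => 1) = 1.
{ rewrite (CV_radius_finite_DAlembert (fun _ => 1) 1); try lra.
  - by rewrite Rinv_1.
  - by move=> _; lra.
  - apply: (is_lim_seq_ext (fun _ => 1)); last exact: is_lim_seq_const.
    by move=> n; rewrite /Rdiv Rinv_1 Rmult_1_r Rabs_R1. }
have := CV_disk_inside (PS_derive (fun _ => 1)) q.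
rewrite CV_radius_derive radius_geom => /(_ Hq) /ex_series_Rabs.
apply: ex_series_ext => n.
by rewrite /PS_derive S_INR Rmult_1_r.
Qed.

Lemma exp_mul_INR n x : exp (INR n * x) = exp x ^ n.
Proof. by rewrite -Rpower_pow ?/Rpower ?ln_exp //; exact: exp_pos. Qed.

Lemma ex_series_succ_mul_of_exp_decay (u : nat -> R) C l N :
  0 < l -> (forall n, 0 <= u n) ->
  (forall n, (N <= n)%nat -> u n <= C * exp (- INR n / l)) ->
  ex_series (fun n => (INR n + 1) * u n).
Proof.
move=> Hl Hu Hdec.
set q := exp (- / l).
have Hq : Rabs q < 1.
{ rewrite Rabs_pos_eq; last exact/Rlt_le/exp_pos.
  rewrite -exp_0; apply: exp_increasing.
  apply/Ropp_lt_gt_0_contravar/Rinv_0_lt_compat/Hl. }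
apply/(ex_series_incr_n _ N).
apply: (@ex_series_le _ _ _ (fun k => C * ((INR (N + k) + 1) * q ^ (N + k)))).
- move=> k; rewrite /norm /= /abs /= plusE.
  have Hk := Hdec (N + k)%nat (leq_addr k N).
  have Epow : exp (- INR (N + k) / l) = q ^ (N + k).
  { by rewrite /q -exp_mul_INR; congr exp; field; lra. }
  rewrite Epow in Hk.
  have Hn := pos_INR (N + k).
  rewrite Rabs_pos_eq; last by apply: Rmult_le_pos; [lra | exact: Hu].
  rewrite -Rmult_assoc (Rmult_comm C) Rmult_assoc.
  by apply: Rmult_le_compat_l; lra.
- apply: ex_series_scal.
  exact/(ex_series_incr_n (fun n => (INR n + 1) * q ^ n))/ex_series_succ_mul_geom.
Qed.

Lemma CVU_dom_Mtest (fn g : nat -> R -> R) (M : nat -> R) (D : R -> Prop) :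
  (forall n x, fn n x = sum_n (fun j => g j x) n) ->
  (forall j x, Rabs (g j x) <= M j) -> ex_series M -> CVU_dom fn D.
Proof.
move=> Efn HM /Cauchy_ex_series HC; apply/CVU_dom_cauchy => eps.
have [N HN] := HC eps; exists (S N).
have Htail n m x : (m < n)%coq_nat -> (S N <= m)%coq_nat -> Rabs (fn n x - fn m x) < eps.
{ move=> Hmn Hm.
  have -> : fn n x - fn m x = sum_n_m (fun j => g j x) (S m) n.
    by rewrite !Efn sum_n_m_sum_n //; lia.
  apply: Rle_lt_trans (norm_sum_n_m (fun j => g j x) (S m) n) _.
  apply: Rle_lt_trans (sum_n_m_le _ _ _ _ (fun j => HM j x)) _.
  apply: Rle_lt_trans (Rle_abs _) _; apply: HN; lia. }
move=> n m x _ Hn Hm.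
case: (lt_eq_lt_dec n m) => [[Hnm | <-] | Hmn].
- by rewrite Rabs_minus_sym; apply: Htail.
- by rewrite Rminus_diag Rabs_R0; apply: cond_pos.
- exact: Htail.
Qed.

Lemma continuous_sum_n (f : nat -> R -> R) n x :
  (forall j, continuous (f j) x) -> continuous (fun y => sum_n (fun j => f j y) n) x.
Proof.
move=> Hf; elim: n => [|n IH].
  by apply: (continuous_ext (f 0%nat)) => // y; rewrite sum_O.
apply: (continuous_ext (fun y => sum_n (fun j => f j y) n + f (S n) y)).
  by move=> y; rewrite sum_Sn.
exact: continuous_plus.
Qed.

Section TermwiseDerivative.

Variables (u m : nat -> R) (phi psi : R -> R).
Hypothesis phi_derive : forall x, is_derive phi x (psi x).
Hypothesis psi_continuous : forall x, continuous psi x.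
Hypothesis phi_bound : forall x, Rabs (phi x) <= 1.
Hypothesis psi_bound : forall x, Rabs (psi x) <= 1.
Hypothesis u_summable : ex_series (fun n => Rabs (u n)).
Hypothesis um_summable : ex_series (fun n => Rabs (u n * m n)).

Lemma ex_derive_Series_dilation k :
  ex_derive (fun k => Series (fun n => u n * phi (k * m n))) k.
Proof.
pose fn n x := sum_n (fun j => u j * phi (x * m j)) n.
pose dfn n x := sum_n (fun j => u j * m j * psi (x * m j)) n.
have fn_derive n x : is_derive (fn n) x (dfn n x).
{ apply: is_derive_sum_n => j _.
  have Hlin : is_derive (fun y => y * m j) x (m j) by auto_derive; [|ring].
  have := is_derive_scal _ x (u j) _ (is_derive_comp phi _ x _ _ (phi_derive _) Hlin).
  by rewrite /scal /= /mult /= -Rmult_assoc. }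
have Dfn n x : Derive (fn n) x = dfn n x by apply/is_derive_unique/fn_derive.
have Hbound (a : R) f : (forall x, Rabs (f x) <= 1) -> forall x, Rabs (a * f x) <= Rabs a.
{ move=> Hf x; rewrite Rabs_mult -{2}(Rmult_1_r (Rabs a)).
  exact/Rmult_le_compat_l/Hf/Rabs_pos. }
eexists; apply: (CVU_Derive fn (fun _ => True)) => //.
- exact: open_true.
- apply: (CVU_dom_Mtest _ (fun j x => u j * phi (x * m j)) (fun j => Rabs (u j))) => //.
  by move=> j x; apply: Hbound => y; apply: phi_bound.
- by move=> n x _; eexists; apply: fn_derive.
- move=> n x _; apply/continuity_pt_filterlim.
  apply: (continuous_ext (dfn n)) => [y | ]; first by rewrite Dfn.
  apply: continuous_sum_n => j; apply: continuous_scal_r.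
  exact/(continuous_comp (fun y => y * m j))/psi_continuous/continuous_scal_l/continuous_id.
- apply: (CVU_dom_Mtest _ (fun j x => u j * m j * psi (x * m j)) (fun j => Rabs (u j * m j))) => //.
  by move=> j x; apply: Hbound => y; apply: psi_bound.
Qed.

End TermwiseDerivative.

Lemma Derive_opp_of_even (f : R -> R) k :
  (forall x, f (- x) = f x) -> ex_derive f k -> Derive f (- k) = - Derive f k.
Proof.
move=> Hf [l Hl]; rewrite (is_derive_unique _ _ _ Hl); apply: is_derive_unique.
have Hopp : is_derive (fun x => - x) (- k) (-1) by auto_derive; [|ring].
rewrite -(Ropp_involutive k) in Hl.
have := is_derive_comp f _ (- k) _ _ Hl Hopp.
rewrite /scal /= /mult /= -Ropp_mult_distr_l Rmult_1_l.
apply: is_derive_ext => x; exact: Hf.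
Qed.

(* [RInt] is defined by a description operator, which yields [0] when there
   is no integral. *)
Lemma RInt_not_ex (f : R -> R) a b : ~ ex_RInt f a b -> RInt f a b = 0.
Proof.
move=> Hf; rewrite /RInt /Hierarchy.iota /lim /= /R_complete_lim.
set E := (fun x => _).
have HE x : E x by move=> y Hy; case: Hf; exists y.
have [Hub _] := Lub_Rbar_correct E.
case: (Lub_Rbar E) Hub => [r | | ] Hub //.
by have := Hub (r + 1) (HE _); rewrite /=; lra.
Qed.

Lemma RInt_odd (g : R -> R) a : (forall x, g (- x) = - g x) -> RInt g (- a) a = 0.
Proof.
move=> Hg; case: (classic (ex_RInt g (- a) a)) => [[v HI] | /RInt_not_ex //].
have HI' : is_RInt g (- a) a (- v).
{ apply: is_RInt_swap.
  have := is_RInt_comp_opp g a (- a) v; rewrite Ropp_involutive => /(_ HI).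
  by apply: is_RInt_ext => x _; rewrite Hg; apply: Ropp_involutive. }
have := is_RInt_unique _ _ _ _ HI'; rewrite (is_RInt_unique _ _ _ _ HI); lra.
Qed.

Definition Zsummable (g : Z -> R) : Prop :=
  ex_series (fun n => Rabs (g (Z.of_nat n))) /\
  ex_series (fun n => Rabs (g (Z.opp (Z.of_nat (S n))))).

Lemma Zsummable_le (f g : Z -> R) :
  (forall z, Rabs (f z) <= g z) -> Zsummable g -> Zsummable f.
Proof.
have Hle (u v : nat -> R) : (forall n, Rabs (u n) <= v n) ->
    ex_series (fun n => Rabs (v n)) -> ex_series (fun n => Rabs (u n)).
{ move=> Huv; apply: ex_series_le => n.
  rewrite /norm /= /abs /= Rabs_Rabsolu.
  exact: Rle_trans (Huv n) (Rle_abs _). }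
by move=> Hfg [Hp Hn]; split; [apply: Hle Hp | apply: Hle Hn].
Qed.

Lemma Zsummable_moment_of_exp_decay (c : Z -> R) C l N :
  0 < l -> (forall z, 0 <= c z) ->
  (forall z, Z.le N (Z.abs z) -> c z <= C * exp (- IZR (Z.abs z) / l)) ->
  Zsummable (fun z => (IZR (Z.abs z) + 1) * c z).
Proof.
move=> Hl Hc Hdec.
have Eabs z n : Z.abs z = Z.of_nat n ->
    Rabs ((IZR (Z.abs z) + 1) * c z) = (INR n + 1) * c z.
{ move=> ->; rewrite -INR_IZR_INZ Rabs_pos_eq //.
  by apply: Rmult_le_pos => //; have := pos_INR n; lra. }
have Hhalf (s : nat -> Z) : (forall n, Z.abs (s n) = Z.of_nat n) ->
    ex_series (fun n => (INR n + 1) * c (s n)).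
{ move=> Hs; apply: (ex_series_succ_mul_of_exp_decay _ C l (Z.to_nat N) Hl) => // n Hn.
  have := Hdec (s n); rewrite Hs -INR_IZR_INZ; apply.
  by move/leP: Hn; lia. }
split.
- apply: (ex_series_ext (fun n => (INR n + 1) * c (Z.of_nat n))).
    by move=> n; rewrite (Eabs _ n) //; lia.
  by apply: Hhalf; lia.
- apply: (ex_series_ext (fun n => (INR (S n) + 1) * c (Z.opp (Z.of_nat (S n))))).
    by move=> n; rewrite (Eabs _ (S n)) //; lia.
  apply/(ex_series_incr_1 (fun n => (INR n + 1) * c (Z.opp (Z.of_nat n)))).
  by apply: Hhalf; lia.
Qed.

Lemma ZSeries_ext (f g : Z -> R) : (forall z, f z = g z) -> ZSeries f = ZSeries g.
Proof. by move=> Hfg; rewrite /ZSeries; congr Rplus; apply: Series_ext. Qed.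

Lemma ZSeries_scal_l r (g : Z -> R) : ZSeries (fun z => r * g z) = r * ZSeries g.
Proof. by rewrite /ZSeries !Series_scal_l Rmult_plus_distr_l. Qed.

Lemma ZSeries_opp (g : Z -> R) : Zsummable g -> ZSeries (fun z => g (Z.opp z)) = ZSeries g.
Proof.
move=> [/ex_series_Rabs Hp /ex_series_Rabs Hn].
rewrite /ZSeries (Series_incr_1 (fun n => g (Z.of_nat n))) //.
rewrite (Series_incr_1 (fun n => g (Z.opp (Z.of_nat n)))); last exact/ex_series_incr_1.
rewrite (Series_ext (fun n => g (Z.opp (Z.opp (Z.of_nat (S n))))) (fun n => g (Z.of_nat (S n)))).
  (* [ZSeries] adds with the ring-structure [+], which [lra] does not parse. *)
  by rewrite -[Z.opp (Z.of_nat 0)]/(Z.of_nat 0) -!RplusE; lra.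
by move=> n; rewrite Z.opp_involutive.
Qed.

Lemma ZSeries_reflect (f g : Z -> R) r :
  Zsummable g -> (forall z, f z = r * g (Z.opp z)) -> ZSeries f = r * ZSeries g.
Proof.
move=> Hg Hfg.
by rewrite (ZSeries_ext _ _ Hfg) ZSeries_scal_l (ZSeries_opp _ Hg).
Qed.

Lemma ex_derive_ZSeries_dilation (c : Z -> R) (phi psi : R -> R) k :
  (forall x, is_derive phi x (psi x)) -> (forall x, continuous psi x) ->
  (forall x, Rabs (phi x) <= 1) -> (forall x, Rabs (psi x) <= 1) ->
  Zsummable c -> Zsummable (fun z => c z * IZR z) ->
  ex_derive (fun k => ZSeries (fun z => c z * phi (k * IZR z))) k.
Proof.
move=> Hd Hc Hphi Hpsi [Hc1 Hc2] [Hm1 Hm2].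
apply: ex_derive_plus; exact: ex_derive_Series_dilation.
Qed.

Lemma transl_inv_shift (D : nat) (T : ZMat D) : is_transl_inv T ->
  forall n i a j b, T (Z.add i n) a (Z.add j n) b = T i a j b.
Proof.
move=> HT n; elim/Z.peano_ind: n => [| n IH | n IH] i a j b.
- by rewrite !Z.add_0_r.
- by rewrite !Z.add_succ_r -!Z.add_1_r HT IH.
- by rewrite -HT -!Z.add_assoc /= !Z.add_0_r IH.
Qed.

Section ComplexValued.

Local Open Scope ring_scope.
Local Open Scope complex_scope.

Lemma det_diag_conj_tr (F : fieldType) n (M N : 'M[F]_n) (d : 'I_n -> F) :
  (forall a, d a != 0) -> (forall a b, M a b = d a * N b a / d b) -> \det M = \det N.
Proof.
move=> Hd HM.
have -> : M = diag_mx (\row_a d a) *m N^T *m diag_mx (\row_a (d a)^-1).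
  by apply/matrixP => a b; rewrite mul_mx_diag mul_diag_mx !mxE HM.
rewrite !det_mulmx det_tr !det_diag mulrAC -big_split /= big1 ?mul1r // => a _.
by rewrite !mxE divff.
Qed.

Lemma real_complexM (K : rcfType) (r x y : K) : r%:C * (x +i* y) = (r * x) +i* (r * y).
Proof. by rewrite /GRing.mul /= !mul0r subr0 addr0. Qed.

Definition cderivable (f : R -> R[i]) : Prop :=
  forall k, ex_derive (fun x => Re (f x)) k /\ ex_derive (fun x => Im (f x)) k.

Lemma cderivable_ext (f g : R -> R[i]) : (forall k, f k = g k) -> cderivable f -> cderivable g.
Proof.
move=> Hfg Hf k; have [Hre Him] := Hf k.
by split; [apply: ex_derive_ext Hre | apply: ex_derive_ext Him] => x; rewrite Hfg.
Qed.

Lemma cderivable_cst (c : R[i]) : cderivable (fun _ => c).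
Proof. by move=> k; split; apply: ex_derive_const. Qed.

Lemma cderivable_add (f g : R -> R[i]) :
  cderivable f -> cderivable g -> cderivable (fun k => f k + g k).
Proof.
move=> Hf Hg k; have [Hf1 Hf2] := Hf k; have [Hg1 Hg2] := Hg k.
have Re_add (x y : R[i]) : Re (x + y) = Re x + Re y by case: x; case: y.
have Im_add (x y : R[i]) : Im (x + y) = Im x + Im y by case: x; case: y.
split.
- by apply: (ex_derive_ext (fun x => Re (f x) + Re (g x))) => [x|]; [rewrite Re_add | apply: ex_derive_plus].
- by apply: (ex_derive_ext (fun x => Im (f x) + Im (g x))) => [x|]; [rewrite Im_add | apply: ex_derive_plus].
Qed.

Lemma cderivable_mul (f g : R -> R[i]) :
  cderivable f -> cderivable g -> cderivable (fun k => f k * g k).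
Proof.
move=> Hf Hg k; have [Hf1 Hf2] := Hf k; have [Hg1 Hg2] := Hg k.
have Re_mul (x y : R[i]) : Re (x * y) = Re x * Re y - Im x * Im y by case: x; case: y.
have Im_mul (x y : R[i]) : Im (x * y) = Re x * Im y + Im x * Re y by case: x => ? ?; case: y.
split.
- apply: (ex_derive_ext (fun x => Re (f x) * Re (g x) - Im (f x) * Im (g x))) => [x|].
    by rewrite Re_mul.
  by apply: ex_derive_minus; apply: ex_derive_mult.
- apply: (ex_derive_ext (fun x => Re (f x) * Im (g x) + Im (f x) * Re (g x))) => [x|].
    by rewrite Im_mul.
  by apply: ex_derive_plus; apply: ex_derive_mult.
Qed.

Lemma cderivable_big (op : R[i] -> R[i] -> R[i]) (idx : R[i]) (I : Type) (r : seq I)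
    (P : pred I) (F : I -> R -> R[i]) :
  (forall f g, cderivable f -> cderivable g -> cderivable (fun k => op (f k) (g k))) ->
  (forall i, cderivable (F i)) ->
  cderivable (fun k => \big[op/idx]_(i <- r | P i) F i k).
Proof.
move=> Hop HF; elim: r => [|i r IH].
  by apply: (cderivable_ext (fun _ => idx)) => [k|]; [rewrite big_nil | apply: cderivable_cst].
apply: (cderivable_ext (fun k => if P i then op (F i k) (\big[op/idx]_(j <- r | P j) F j k)
                                 else \big[op/idx]_(j <- r | P j) F j k)).
  by move=> k; rewrite big_cons.
by case: (P i) => //; apply: Hop.
Qed.

Lemma cderivable_det n (M : R -> 'M[R[i]]_n) :
  (forall a b, cderivable (fun k => M k a b)) -> cderivable (fun k => \det (M k)).
Proof.
move=> HM.
apply: cderivable_big => [f g|s]; first exact: cderivable_add.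
apply: cderivable_mul; first exact: cderivable_cst.
apply: cderivable_big => [f g|i]; [exact: cderivable_mul | exact: HM].
Qed.

End ComplexValued.

Section BlochMatrix.

Variables (D : nat) (T : ZMat D).
Hypothesis T_local : is_local T.
Hypothesis T_stochastic : is_stochastic T.

Lemma T_nonneg i a j b : 0 <= T i a j b.
Proof. exact/RleP/(proj1 T_stochastic). Qed.

Lemma column_moment_summable a b :
  Zsummable (fun z => (IZR (Z.abs z) + 1) * T z a Z0 b).
Proof.
have [C [l [_ [/RltP Hl [N HN]]]]] := T_local.
apply: (Zsummable_moment_of_exp_decay _ C l N Hl) => [z | z Hz].
- exact: T_nonneg.
- by have := HN z a Z0 b; rewrite Z.sub_0_r => /(_ Hz) /RleP.
Qed.

Lemma column_summable a b : Zsummable (fun z => T z a Z0 b).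
Proof.
apply: Zsummable_le (column_moment_summable a b) => z.
have Hz : 0 <= IZR (Z.abs z) by apply/IZR_le/Z.abs_nonneg.
have Hpos := T_nonneg z a Z0 b.
by rewrite Rabs_pos_eq //; nra.
Qed.

Lemma column_first_moment_summable a b : Zsummable (fun z => T z a Z0 b * IZR z).
Proof.
apply: Zsummable_le (column_moment_summable a b) => z.
have Hpos := T_nonneg z a Z0 b.
rewrite Rabs_mult Rabs_pos_eq // Rmult_comm abs_IZR.
by apply: Rmult_le_compat_r => //; lra.
Qed.

Lemma Bloch_imE k a b :
  Bloch_im T k a b = ZSeries (fun z => T z a Z0 b * - sin (k * IZR z)).
Proof. by apply: ZSeries_ext => z; exact: (Ropp_mult_distr_r _ _). Qed.

Lemma Bloch_re_derivable a b k : ex_derive (fun k => Bloch_re T k a b) k.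
Proof.
apply: (ex_derive_ZSeries_dilation _ cos (fun x => - sin x)).
- exact: is_derive_cos.
- by move=> x; apply/continuous_opp/continuous_sin.
- by move=> x; apply/Rabs_le/COS_bound.
- by move=> x; rewrite Rabs_Ropp; apply/Rabs_le/SIN_bound.
- exact: column_summable.
- exact: column_first_moment_summable.
Qed.

Lemma Bloch_im_derivable a b k : ex_derive (fun k => Bloch_im T k a b) k.
Proof.
apply: (ex_derive_ext (fun k => ZSeries (fun z => T z a Z0 b * - sin (k * IZR z)))).
  by move=> x; rewrite Bloch_imE.
apply: (ex_derive_ZSeries_dilation _ (fun x => - sin x) (fun x => - cos x)).
- by move=> x; apply/is_derive_opp/is_derive_sin.
- by move=> x; apply/continuous_opp/continuous_cos.
- by move=> x; rewrite Rabs_Ropp; apply/Rabs_le/SIN_bound.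
- by move=> x; rewrite Rabs_Ropp; apply/Rabs_le/COS_bound.
- exact: column_summable.
- exact: column_first_moment_summable.
Qed.

Variable pi : 'I_D -> R.
Hypothesis pi_pos : forall a, 0 < pi a.
Hypothesis T_transl_inv : is_transl_inv T.
Hypothesis T_detailed_balance : forall i a j b, T i a j b * pi b = T j b i a * pi a.

Lemma column_detailed_balance z a b : T z a Z0 b = pi a / pi b * T (Z.opp z) b Z0 a.
Proof.
have Hb := pi_pos b.
have Eshift := transl_inv_shift D T T_transl_inv z (Z.opp z) b Z0 a.
rewrite Z.add_opp_diag_l Z.add_0_l in Eshift.
apply: (Rmult_eq_reg_r (pi b)); last lra.
rewrite T_detailed_balance Eshift; field; lra.
Qed.

Lemma ZSeries_column_reflect (h : R -> R) k a b : (forall x, Rabs (h x) <= 1) ->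
  ZSeries (fun z => T z a Z0 b * h (k * IZR z))
  = pi a / pi b * ZSeries (fun z => T z b Z0 a * h (- k * IZR z)).
Proof.
move=> Hh; apply: ZSeries_reflect => [|z].
- apply: Zsummable_le (column_summable b a) => z.
  rewrite Rabs_mult (Rabs_pos_eq _ (T_nonneg _ _ _ _)) -{2}(Rmult_1_r (T z b Z0 a)).
  exact/Rmult_le_compat_l/Hh/T_nonneg.
- by rewrite column_detailed_balance opp_IZR Rmult_opp_opp Rmult_assoc.
Qed.

Lemma Bloch_re_reflect k a b : Bloch_re T k a b = pi a / pi b * Bloch_re T (- k) b a.
Proof. by apply: ZSeries_column_reflect => x; apply/Rabs_le/COS_bound. Qed.

Lemma Bloch_im_reflect k a b : Bloch_im T k a b = pi a / pi b * Bloch_im T (- k) b a.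
Proof.
rewrite !Bloch_imE; apply: (ZSeries_column_reflect (fun x => - sin x)) => x.
by rewrite Rabs_Ropp; apply/Rabs_le/SIN_bound.
Qed.

Local Open Scope ring_scope.
Local Open Scope complex_scope.

Lemma Bloch_reflect k a b : Bloch T k a b = (pi a)%:C * Bloch T (- k) b a / (pi b)%:C.
Proof.
rewrite !mxE mulrAC -fmorphV -rmorphM real_complexM.
by rewrite Bloch_re_reflect Bloch_im_reflect.
Qed.

Lemma detBloch_even k : detBloch T (- k) = detBloch T k.
Proof.
symmetry; apply: (det_diag_conj_tr _ _ _ _ (fun a => (pi a)%:C)) => [a|a b].
  by rewrite eq_complex /= negb_and; apply/orP; left; apply/eqP/Rgt_not_eq/pi_pos.
exact: Bloch_reflect.
Qed.

Lemma detBloch_cderivable : cderivable (detBloch T).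
Proof.
apply: cderivable_det => a b.
apply: (cderivable_ext (fun k => Bloch_re T k a b +i* Bloch_im T k a b)) => [k|k].
  by rewrite mxE.
by split; [apply: Bloch_re_derivable | apply: Bloch_im_derivable].
Qed.

Lemma dlogdet_odd k : dlogdet T (- k) = - dlogdet T k.
Proof.
have [Hre Him] := detBloch_cderivable k.
rewrite /dlogdet /detBloch_deriv detBloch_even -mulNr; congr (_ / _).
by rewrite !(Derive_opp_of_even _ k) // => x; rewrite detBloch_even.
Qed.

End BlochMatrix.

Theorem mainTheorem9 (D : nat) (T : ZMat D) (pi : 'I_D -> R) :
  is_local T ->
  is_transl_inv T ->
  is_stochastic T ->
  (forall k : R, (- PI <= k <= PI)%R -> detBloch T k <> 0%R) ->
  (forall a, (0 < pi a)%R) ->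
  (forall i a, Zsum_is (fun j => \sum_(b < D) T i a j b * pi b)%R (pi a)) ->
  (forall i a j b, (T i a j b * pi b = T j b i a * pi a)%R) ->
  winding0 T = 0%R.
Proof.
move=> Hloc Htr Hst _ Hpi _ Hdb.
have Hodd := dlogdet_odd D T Hloc Hst pi (fun a => elimT RltP (Hpi a)) Htr Hdb.
by rewrite /winding0 !RInt_odd ?mul0r // => k; rewrite Hodd; case: (dlogdet T k).
Qed.
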